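(* Suppose $\mathcal F\subset\binom{[n]}{4}$ satisfies $\gamma_3(\mathcal F)\geq 3$ and $|F\cap F'|=1$ for all distinct $F,F'\in\mathcal F$. Then $\mathcal F$ is isomorphic to $\mathcal L_3$.
   Context: For $S\subset[n]$, $\mathcal F(\overline S)=\{F\in\mathcal F: F\cap S=\emptyset\}$, and $\gamma_3(\mathcal F)=\min_{S\in\binom{[n]}{3}}|\mathcal F(\overline S)|$. $\mathcal L_3$ is the family of lines of the projective plane of order 3: on the vertex set $\mathbb Z_{13}$, $\mathcal L_3=\{\{i,i+1,i+3,i+9\}: i\in\mathbb Z_{13}\}$ (addition modulo 13). Isomorphic means equal up to an injective relabeling of vertices. *)

From mathcomp Require Import all_boot.
Set Implicit Arguments. Unset Strict Implicit. Unset Printing Implicit Defensive.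

Definition avoid (n : nat) (FF : {set {set 'I_n}}) (S : {set 'I_n}) : {set {set 'I_n}} :=
  [set F in FF | [disjoint F & S]].

Definition gamma3_ge (n : nat) (FF : {set {set 'I_n}}) (k : nat) : Prop :=
  forall S : {set 'I_n}, #|S| = 3 -> k <= #|avoid FF S|.

Definition z13 (x : nat) : 'I_13 := inord (x %% 13).

(* Lines of PG(2,3): {i, i+1, i+3, i+9} mod 13 *)
Definition L3 : {set {set 'I_13}} :=
  [set [set z13 i; z13 (i + 1); z13 (i + 3); z13 (i + 9)] | i : 'I_13].

Definition fam_iso (m n : nat) (G : {set {set 'I_m}}) (FF : {set {set 'I_n}}) : Prop :=
  exists f : 'I_m -> 'I_n, injective f /\ FF = [set f @: (L : {set 'I_m}) | L in G].

From mathcomp Require Import all_boot.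
Set Implicit Arguments. Unset Strict Implicit. Unset Printing Implicit Defensive.

(* Every point p of a line L lies on at least three further lines, since the
   lines avoiding L minus p are the other lines through p.  Hence any
   two covered points are joined by a line.  Fix a point x and the four lines
   through it, with remaining points P g k.  A line missing x meets each of
   them once; indexing such lines by their points on the first two pencil
   lines, the points on the last two form a pair of orthogonal Latin squares
   of order 3.  After relabelling, these are in normal form and hence unique,
   which gives an explicit labelling of the points by Z_13 carrying the lines
   {c, c+1, c+3, c+9} onto the family. *)

Definition q0 : 'I_4 := @Ordinal 4 0 isT.
Definition q1 : 'I_4 := @Ordinal 4 1 isT.
Definition q2 : 'I_4 := @Ordinal 4 2 isT.
Definition q3 : 'I_4 := @Ordinal 4 3 isT.
Definition t0 : 'I_3 := @Ordinal 3 0 isT.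
Definition t1 : 'I_3 := @Ordinal 3 1 isT.
Definition t2 : 'I_3 := @Ordinal 3 2 isT.

Lemma ord3P (k : 'I_3) : k = t0 \/ k = t1 \/ k = t2.
Proof. by case: k => [[|[|[|m]]] lt_k3] //; [left|right; left|right; right]; apply: val_inj. Qed.

Lemma ord4P (g : 'I_4) : g = q0 \/ g = q1 \/ g = q2 \/ g = q3.
Proof.
by case: g => [[|[|[|[|m]]]] lt_g4] //; [left|right; left|right; right; left|right; right; right];
  apply: val_inj.
Qed.

Lemma ord3_eq0 (k : 'I_3) : k != t1 -> k != t2 -> k = t0.
Proof. by case: (ord3P k) => [|[|]] ->. Qed.
Lemma ord3_eq1 (k : 'I_3) : k != t0 -> k != t2 -> k = t1.
Proof. by case: (ord3P k) => [|[|]] ->. Qed.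
Lemma ord3_eq2 (k : 'I_3) : k != t0 -> k != t1 -> k = t2.
Proof. by case: (ord3P k) => [|[|]] ->. Qed.

Lemma imset_ord3 (T : finType) (f : 'I_3 -> T) : [set f k | k : 'I_3] = [set f t0; f t1; f t2].
Proof.
apply/setP => z; apply/imsetP/idP => [[k _ ->]|].
  by rewrite !inE; case: (ord3P k) => [->|[->|->]]; rewrite eqxx ?orbT.
by rewrite !inE => /orP[/orP[]|] /eqP ->; [exists t0 | exists t1 | exists t2].
Qed.

Lemma cards4 (T : finType) (a b c d : T) :
  a != b -> a != c -> a != d -> b != c -> b != d -> c != d -> #|[set a; b; c; d]| = 4.
Proof.
move=> ab ac ad bc bd cd.
have -> : [set a; b; c; d] = a |: (b |: (c |: [set d])) by apply/setP => z; rewrite !inE !orbA.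
by rewrite !cardsU1 cards1 !inE (negbTE ab) (negbTE ac) (negbTE ad) (negbTE bc) (negbTE bd)
  (negbTE cd).
Qed.

Lemma subset4 (T : finType) (a b c d : T) (S : {set T}) :
  a \in S -> b \in S -> c \in S -> d \in S -> [set a; b; c; d] \subset S.
Proof. by move=> aS bS cS dS; apply/subsetP => z; rewrite !inE => /orP[/orP[/orP[]|]|] /eqP ->. Qed.

Lemma set_enum_ord (T : finType) (A : {set T}) k : #|A| = k ->
  exists q : 'I_k -> T, injective q /\ A = [set q i | i : 'I_k].
Proof.
move=> <-; exists (@enum_val T (mem A)); split; first exact: enum_val_inj.
apply/setP => p; apply/idP/imsetP => [pA|[i _ ->]]; last exact: enum_valP.
by exists (enum_rank_in pA p) => //; rewrite enum_rankK_in.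
Qed.

(* A normalised pair of orthogonal Latin squares of order 3 is unique. *)
Lemma normal_orthogonal_latin3 (f g : 'I_3 -> 'I_3 -> 'I_3) :
  (forall j, f t0 j = j) -> (forall j, g t0 j = j) -> (forall i, f i t0 = i) ->
  (forall i, injective (f i)) -> (forall j, injective (f^~ j)) ->
  (forall i, injective (g i)) -> (forall j, injective (g^~ j)) ->
  (forall i j i' j', f i j = f i' j' -> g i j = g i' j' -> i = i' /\ j = j') ->
  (f t1 t1 = t2 /\ f t1 t2 = t0 /\ f t2 t1 = t0 /\ f t2 t2 = t1) /\
  (g t1 t0 = t2 /\ g t1 t1 = t0 /\ g t1 t2 = t1 /\ g t2 t0 = t1 /\ g t2 t1 = t2 /\ g t2 t2 = t0).
Proof.
move=> f0j g0j fi0 fjI fiI gjI giI orth.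
have nf i j j' : j != j' -> f i j != f i j' by move=> ne; apply: contra ne => /eqP /fjI ->.
have nfi i i' j : i != i' -> f i j != f i' j by move=> ne; apply: contra ne => /eqP /(fiI j) ->.
have ng i j j' : j != j' -> g i j != g i j' by move=> ne; apply: contra ne => /eqP /gjI ->.
have ngi i i' j : i != i' -> g i j != g i' j by move=> ne; apply: contra ne => /eqP /(giI j) ->.
have f12 : f t1 t2 = t0.
  by apply: ord3_eq0;
    [move: (nf t1 t2 t0 isT); rewrite fi0 | move: (nfi t1 t0 t2 isT); rewrite f0j].
have f11 : f t1 t1 = t2.
  by apply: ord3_eq2;
    [move: (nf t1 t1 t2 isT); rewrite f12 | move: (nf t1 t1 t0 isT); rewrite fi0].
have f21 : f t2 t1 = t0.
  by apply: ord3_eq0;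
    [move: (nfi t2 t0 t1 isT); rewrite f0j | move: (nf t2 t1 t0 isT); rewrite fi0].
have f22 : f t2 t2 = t1.
  by apply: ord3_eq1;
    [move: (nf t2 t2 t1 isT); rewrite f21 | move: (nf t2 t2 t0 isT); rewrite fi0].
(* g 1 0 = 1 would force g 1 1 = 2 = g 0 2 while f 1 1 = 2 = f 0 2. *)
have g10 : g t1 t0 = t2.
  apply: ord3_eq2; first by move: (ngi t1 t0 t0 isT); rewrite g0j.
  apply/eqP => g10.
  have g12 : g t1 t2 = t0.
    by apply: ord3_eq0;
      [move: (ng t1 t2 t0 isT); rewrite g10 | move: (ngi t1 t0 t2 isT); rewrite g0j].
  have g11 : g t1 t1 = t2.
    by apply: ord3_eq2;
      [move: (ng t1 t1 t2 isT); rewrite g12 | move: (ngi t1 t0 t1 isT); rewrite g0j].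
  have ef : f t1 t1 = f t0 t2 by rewrite f11 f0j.
  have eg : g t1 t1 = g t0 t2 by rewrite g11 g0j.
  by case: (orth _ _ _ _ ef eg).
have g11 : g t1 t1 = t0.
  by apply: ord3_eq0;
    [move: (ngi t1 t0 t1 isT); rewrite g0j | move: (ng t1 t1 t0 isT); rewrite g10].
have g12 : g t1 t2 = t1.
  by apply: ord3_eq1;
    [move: (ng t1 t2 t1 isT); rewrite g11 | move: (ng t1 t2 t0 isT); rewrite g10].
have g20 : g t2 t0 = t1.
  by apply: ord3_eq1;
    [move: (ngi t2 t0 t0 isT); rewrite g0j | move: (ngi t2 t1 t0 isT); rewrite g10].
have g21 : g t2 t1 = t2.
  by apply: ord3_eq2;
    [move: (ngi t2 t1 t1 isT); rewrite g11 | move: (ng t2 t1 t0 isT); rewrite g20].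
have g22 : g t2 t2 = t0.
  by apply: ord3_eq0;
    [move: (ng t2 t2 t0 isT); rewrite g20 | move: (ng t2 t2 t1 isT); rewrite g21].
by [].
Qed.

Definition diff_line (c : nat) : {set 'I_13} :=
  [set z13 c; z13 (c + 1); z13 (c + 3); z13 (c + 9)].

(* Coordinates on Z_13 of x (None) and of the points P g k of a normalised
   pencil, chosen so that the lines {c, c+1, c+3, c+9} of L3 become the pencil
   and grid lines listed in line_table below. *)
Definition coord13 (m : nat) : option ('I_4 * 'I_3) :=
  match m with
  | 0 => None | 1 => Some (q0, t0) | 2 => Some (q3, t0) | 3 => Some (q0, t1)
  | 4 => Some (q1, t0) | 5 => Some (q1, t1) | 6 => Some (q2, t1) | 7 => Some (q1, t2)
  | 8 => Some (q3, t1) | 9 => Some (q0, t2) | 10 => Some (q2, t0) | 11 => Some (q2, t2)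
  | _ => Some (q3, t2)
  end.

Definition uncoord13 (o : option ('I_4 * 'I_3)) : nat :=
  if o is Some (g, k) then nth 0 [:: 1; 3; 9; 4; 5; 7; 10; 6; 11; 2; 8; 12] (3 * g + k) else 0.

Lemma coord13K m : m < 13 -> uncoord13 (coord13 m) = m.
Proof. by do 13 case: m => [|m] //. Qed.

Lemma coord13_inj : injective (fun v : 'I_13 => coord13 v).
Proof. by move=> v w e; apply: val_inj; rewrite /= -(coord13K (ltn_ord v)) e coord13K. Qed.

Section LinearSpace.
Variables (n : nat) (FF : {set {set 'I_n}}).
Hypothesis card_line : forall F, F \in FF -> #|F| = 4.
Hypothesis gammaFF : gamma3_ge FF 3.
Hypothesis meet1 : forall F F', F \in FF -> F' \in FF -> F != F' -> #|F :&: F'| = 1.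

Lemma line_unique F G p q : F \in FF -> G \in FF -> p != q ->
  p \in F -> q \in F -> p \in G -> q \in G -> F = G.
Proof.
move=> FF' GF pq pF qF pG qG; apply/eqP; apply: contraT => FG.
have /eqP := meet1 FF' GF FG; rewrite eqn_leq => /andP[/card_le1P le1 _].
have pI : p \in F :&: G by rewrite inE pF pG.
have qI : q \in F :&: G by rewrite inE qF qG.
by move: (le1 p pI q); rewrite qI !inE eq_sym (negbTE pq).
Qed.

Lemma lines_meet F G : F \in FF -> G \in FF -> exists p, p \in F /\ p \in G.
Proof.
move=> FF' GF; case: (eqVneq F G) => [<-|FG].
  have : 0 < #|F| by rewrite card_line.
  by case/card_gt0P => p pF; exists p.
have : 0 < #|F :&: G| by rewrite meet1.
by case/card_gt0P => p; rewrite inE => /andP[]; exists p.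
Qed.

(* The lines avoiding the 3-set L :\ p are the lines through p other than L. *)
Lemma other_lines_through L p : L \in FF -> p \in L ->
  3 <= #|[set F in FF | (p \in F) && (F != L)]|.
Proof.
move=> LF pL.
have cLp : #|L :\ p| = 3 by have := cardsD1 p L; rewrite card_line // pL add1n => -[<-].
apply: leq_trans (gammaFF cLp) _; apply: subset_leq_card; apply/subsetP => F.
rewrite !inE => /andP[FF' dis]; rewrite FF' /=.
have [r [rF rL]] := lines_meet FF' LF.
have rp : r = p.
  apply/eqP; apply: contraT => rp.
  by have := disjointFr dis rF; rewrite !inE rp rL.
subst r; rewrite rF /=; apply: contraT; rewrite negbK => /eqP FL; subst F.
have : 0 < #|L :\ p| by rewrite cLp.
case/card_gt0P => s sLp.
by have := disjointFl dis sLp; rewrite (subsetP (subsetDl L [set p]) s sLp).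
Qed.

Definition covered p := exists2 F, F \in FF & p \in F.

(* The (at least four) lines through a meet L in distinct points, so they cover L. *)
Lemma line_through_from_outside L a q : L \in FF -> covered a -> a \notin L -> q \in L ->
  exists F, [/\ F \in FF, a \in F & q \in F].
Proof.
move=> LF [L' L'F aL'] aL qL.
pose D := [set F in FF | a \in F].
have cD : 4 <= #|D|.
  rewrite (cardsD1 L') inE L'F aL' /= add1n ltnS.
  apply: leq_trans (other_lines_through L'F aL') _; apply: subset_leq_card.
  by apply/subsetP => F; rewrite !inE => /andP[-> /andP[-> ->]].
pose m F := odflt a [pick r in F :&: L].
have mP F : F \in D -> m F \in F :&: L.
  rewrite inE => /andP[FF' _]; rewrite /m; case: pickP => [//|none].
  have [r [rF rL']] := lines_meet FF' LF.
  by have := none r; rewrite inE rF rL'.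
have m_inj : {in D &, injective m}.
  move=> F G FD GD e.
  have := mP F FD; have := mP G GD; rewrite e !inE => /andP[rG rL] /andP[rF _].
  move: FD GD; rewrite !inE => /andP[FF' aF] /andP[GF aG].
  have ar : a != m G by apply: contraNneq aL => ->.
  exact: (line_unique FF' GF ar aF rF aG rG).
have mD : [set m F | F in D] = L.
  apply/eqP; rewrite eqEcard card_in_imset // card_line // cD andbT.
  by apply/subsetP => r /imsetP[F FD ->]; have := mP F FD; rewrite inE => /andP[].
move: qL; rewrite -mD => /imsetP[F FD ->].
have := mP F FD; move: FD; rewrite !inE => /andP[FF' aF] /andP[mF _].
by exists F.
Qed.

Lemma line_through a q : covered a -> covered q -> a != q ->
  exists F, [/\ F \in FF, a \in F & q \in F].
Proof.
move=> ca [L LF qL] aq.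
case: (boolP (a \in L)) => aL; first by exists L.
exact: (line_through_from_outside LF ca aL qL).
Qed.

Definition pencil_line x (P : 'I_4 -> 'I_3 -> 'I_n) g : {set 'I_n} :=
  x |: [set P g k | k : 'I_3].

Definition pencil x (P : 'I_4 -> 'I_3 -> 'I_n) : Prop :=
  [/\ forall g, pencil_line x P g \in FF,
      forall g k, P g k != x &
      forall g k h l, P g k = P h l -> g = h /\ k = l].

Lemma line_enum_through a q : covered a -> covered q -> a != q ->
  exists p : 'I_3 -> 'I_n, [/\ a |: [set p k | k : 'I_3] \in FF,
    q \in [set p k | k : 'I_3], injective p & a \notin [set p k | k : 'I_3]].
Proof.
move=> ca cq aq; have [F [FF' aF qF]] := line_through ca cq aq.
have cFa : #|F :\ a| = 3 by have := cardsD1 a F; rewrite card_line // aF add1n => -[<-].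
have [p [p_inj eF]] := set_enum_ord cFa.
exists p; rewrite -eF setD1K //; split => //; last by rewrite setD11.
by rewrite !inE eq_sym aq.
Qed.

(* Some line L0 avoids {0, 1, 2}; take x on L0 and join it to the four points
   of a line N through another point y of L0. *)
Lemma pencil_exists : 3 <= n -> exists x P, pencil x P.
Proof.
move=> le3n.
pose S := [set widen_ord le3n i | i : 'I_3].
have cS : #|S| = 3.
  by rewrite card_imset ?cardsT ?card_ord // => a b /(congr1 val) /= /val_inj.
have : 0 < #|avoid FF S| by apply: leq_trans (gammaFF cS).
case/card_gt0P => L0; rewrite inE => /andP[L0F _].
have : 1 < #|L0| by rewrite card_line.
case/card_gt1P => x [y [xL yL xy]].
have : 0 < #|[set F in FF | (y \in F) && (F != L0)]|.
  exact: leq_trans (other_lines_through L0F yL).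
case/card_gt0P => N; rewrite inE => /andP[NF /andP[yN NL]].
have xN : x \notin N.
  apply/negP => xN; have := line_unique NF L0F xy xN yN xL yL.
  by move/eqP; rewrite (negbTE NL).
have [r [r_inj eN]] := set_enum_ord (card_line NF).
have rN g : r g \in N by rewrite eN; apply/imsetP; exists g.
have xr g : x != r g by apply: contraNneq xN => ->.
have join g := line_enum_through (ex_intro2 _ _ L0 L0F xL) (ex_intro2 _ _ N NF (rN g)) (xr g).
have [P PP] := fin_all_exists join.
exists x, P; split=> [g|g k|g k h l e]; first by case: (PP g).
  by case: (PP g) => _ _ _; apply: contraNneq => <-; apply/imsetP; exists k.
have [Mg rg P_inj xg] := PP g; have [Mh rh _ _] := PP h.
case: (eqVneq g h) e => [<- /P_inj //|gh e]; exfalso.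
have Pgk : P g k \in [set P g k | k : 'I_3] by apply/imsetP; exists k.
have xP : x != P g k by apply: contraNneq xg => ->.
have gh_line : x |: [set P g k | k : 'I_3] = x |: [set P h k | k : 'I_3].
  apply: (line_unique Mg Mh xP (setU11 _ _) _ (setU11 _ _)); rewrite !inE ?Pgk ?orbT //.
  by rewrite e; apply/orP; right; apply/imsetP; exists l.
have rgh : r g != r h by apply: contra gh => /eqP /r_inj ->.
have rg' : r g \in x |: [set P h k | k : 'I_3] by rewrite -gh_line !inE rg orbT.
have rh' : r h \in x |: [set P h k | k : 'I_3] by rewrite !inE rh orbT.
by move: xN; rewrite -(line_unique Mh NF rgh rg' rh' (rN g) (rN h)) setU11.
Qed.

(* The line through P q0 i and P q1 j, and the index of its point on the g-th
   pencil line; the defaults set0 and t0 are never used when P is a pencil. *)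
Definition grid_line (P : 'I_4 -> 'I_3 -> 'I_n) i j : {set 'I_n} :=
  odflt set0 [pick F in FF | (P q0 i \in F) && (P q1 j \in F)].

Definition grid_coord (P : 'I_4 -> 'I_3 -> 'I_n) g i j : 'I_3 :=
  odflt t0 [pick k | P g k \in grid_line P i j].

Section Pencil.
Variables (x : 'I_n) (P : 'I_4 -> 'I_3 -> 'I_n).
Hypothesis pencilP : pencil x P.

Lemma pencil_lineF g : pencil_line x P g \in FF.
Proof. by case: pencilP. Qed.

Lemma pencil_neqx g k : P g k != x.
Proof. by case: pencilP. Qed.

Lemma pencil_inj g k h l : P g k = P h l -> g = h /\ k = l.
Proof. by case: pencilP => _ _; apply. Qed.

Lemma pencil_neq g k h l : g != h -> P g k != P h l.
Proof. by move=> gh; apply/eqP => /pencil_inj[e _]; rewrite e eqxx in gh. Qed.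

Lemma mem_pencil_line g p : p \in pencil_line x P g -> p = x \/ exists k, p = P g k.
Proof. by rewrite !inE => /orP[/eqP->|/imsetP[k _ ->]]; [left | right; exists k]. Qed.

Lemma pencil_line_x g : x \in pencil_line x P g.
Proof. exact: setU11. Qed.

Lemma pencil_line_P g k : P g k \in pencil_line x P g.
Proof. by rewrite !inE; apply/orP; right; apply/imsetP; exists k. Qed.

Lemma pencil_lineE g : pencil_line x P g = [set x; P g t0; P g t1; P g t2].
Proof. by rewrite /pencil_line imset_ord3; apply/setP => z; rewrite !inE !orbA. Qed.

Lemma covered_pencil g k : covered (P g k).
Proof. by exists (pencil_line x P g); [exact: pencil_lineF | exact: pencil_line_P]. Qed.

Lemma pencil_line_unique F g k : F \in FF -> x \in F -> P g k \in F ->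
  F = pencil_line x P g.
Proof.
move=> FF' xF kF; apply: (line_unique FF' (pencil_lineF g) _ xF kF).
- by rewrite eq_sym pencil_neqx.
- exact: pencil_line_x.
- exact: pencil_line_P.
Qed.

Lemma meet_pencil_line F g : F \in FF -> x \notin F -> exists k, P g k \in F.
Proof.
move=> FF' xF; have [p [pF pM]] := lines_meet FF' (pencil_lineF g).
case/mem_pencil_line: pM => [e|[k e]]; first by rewrite -e pF in xF.
by exists k; rewrite -e.
Qed.

Lemma meet_pencil_line_unique F g k l : F \in FF -> x \notin F ->
  P g k \in F -> P g l \in F -> k = l.
Proof.
move=> FF' xF kF lF; apply/eqP; apply: contraT => kl.
have ne : P g k != P g l by apply: contra kl => /eqP /pencil_inj[_ ->].
have e := line_unique FF' (pencil_lineF g) ne kF lF (pencil_line_P g k) (pencil_line_P g l).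
by rewrite e pencil_line_x in xF.
Qed.

Lemma grid_lineP i j :
  [/\ grid_line P i j \in FF, P q0 i \in grid_line P i j & P q1 j \in grid_line P i j].
Proof.
rewrite /grid_line; case: pickP => [F /andP[FF' /andP[a b]] //|none].
have [F [FF' a b]] :=
  line_through (covered_pencil q0 i) (covered_pencil q1 j) (@pencil_neq q0 i q1 j isT).
by have := none F; rewrite FF' a b.
Qed.

Lemma grid_lineF i j : grid_line P i j \in FF.
Proof. by case: (grid_lineP i j). Qed.

Lemma grid_line_unique F i j : F \in FF -> P q0 i \in F -> P q1 j \in F ->
  F = grid_line P i j.
Proof.
move=> FF' a b; have [GF a' b'] := grid_lineP i j.
exact: (line_unique FF' GF (@pencil_neq q0 i q1 j isT) a b a' b').
Qed.

Lemma grid_line_nox i j : x \notin grid_line P i j.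
Proof.
have [GF a b] := grid_lineP i j; apply/negP => xG.
move: b; rewrite (pencil_line_unique GF xG a) => /mem_pencil_line[/eqP|[k /pencil_inj[]]] //.
by rewrite (negbTE (pencil_neqx q1 j)).
Qed.

Lemma grid_coordP g i j : P g (grid_coord P g i j) \in grid_line P i j.
Proof.
rewrite /grid_coord; case: pickP => [k //|none].
have [GF _ _] := grid_lineP i j.
have [k kG] := meet_pencil_line g GF (grid_line_nox i j).
by have := none k; rewrite kG.
Qed.

Lemma grid_coord_unique g i j k : P g k \in grid_line P i j -> grid_coord P g i j = k.
Proof.
have [GF _ _] := grid_lineP i j.
exact: (meet_pencil_line_unique GF (grid_line_nox i j) (grid_coordP g i j)).
Qed.

Lemma grid_coord0 i j : grid_coord P q0 i j = i.
Proof. by apply: grid_coord_unique; have [] := grid_lineP i j. Qed.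

Lemma grid_coord1 i j : grid_coord P q1 i j = j.
Proof. by apply: grid_coord_unique; have [] := grid_lineP i j. Qed.

Lemma grid_coord_injr g i : g != q0 -> injective (grid_coord P g i).
Proof.
move=> g0 j j' e.
have [G1 a1 _] := grid_lineP i j; have [G2 a2 b2] := grid_lineP i j'.
have c1 := grid_coordP g i j; have c2 := grid_coordP g i j'; rewrite -e in c2.
have ne : P q0 i != P g (grid_coord P g i j) by apply: pencil_neq; rewrite eq_sym.
rewrite -(line_unique G1 G2 ne a1 c1 a2 c2) in b2.
by rewrite -(grid_coord_unique b2) grid_coord1.
Qed.

Lemma grid_coord_injl g j : g != q1 -> injective (grid_coord P g ^~ j).
Proof.
move=> g1 i i' e.
have [G1 _ a1] := grid_lineP i j; have [G2 b2 a2] := grid_lineP i' j.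
have c1 := grid_coordP g i j; have c2 := grid_coordP g i' j; rewrite /= -e in c2.
have ne : P q1 j != P g (grid_coord P g i j) by apply: pencil_neq; rewrite eq_sym.
rewrite -(line_unique G1 G2 ne a1 c1 a2 c2) in b2.
by rewrite -(grid_coord_unique b2) grid_coord0.
Qed.

Lemma grid_coord_orthogonal i j i' j' :
  grid_coord P q2 i j = grid_coord P q2 i' j' ->
  grid_coord P q3 i j = grid_coord P q3 i' j' -> i = i' /\ j = j'.
Proof.
move=> e2 e3.
have [G1 _ _] := grid_lineP i j; have [G2 a2 b2] := grid_lineP i' j'.
have c1 := grid_coordP q2 i j; have c2 := grid_coordP q2 i' j'; rewrite -e2 in c2.
have d1 := grid_coordP q3 i j; have d2 := grid_coordP q3 i' j'; rewrite -e3 in d2.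
have ne : P q2 (grid_coord P q2 i j) != P q3 (grid_coord P q3 i j) by apply: pencil_neq.
rewrite -(line_unique G1 G2 ne c1 d1 c2 d2) in a2 b2.
by rewrite -(grid_coord_unique a2) -(grid_coord_unique b2) grid_coord0 grid_coord1.
Qed.

Lemma grid_lineE i j : grid_line P i j =
  [set P q0 i; P q1 j; P q2 (grid_coord P q2 i j); P q3 (grid_coord P q3 i j)].
Proof.
have [GF a b] := grid_lineP i j.
apply/esym/eqP; rewrite eqEcard subset4 ?grid_coordP //= card_line //.
by rewrite cards4 ?pencil_neq.
Qed.

Lemma line_cases F : F \in FF ->
  (exists g, F = pencil_line x P g) \/ (exists i j, F = grid_line P i j).
Proof.
move=> FF'; case: (boolP (x \in F)) => xF.
  have [GF _ _] := grid_lineP t0 t0.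
  have [r [rF]] := lines_meet FF' GF.
  rewrite grid_lineE !inE => /orP[/orP[/orP[]|]|] /eqP e; rewrite e in rF;
    by left; eexists; exact: pencil_line_unique rF.
have [i iF] := meet_pencil_line q0 FF' xF.
have [j jF] := meet_pencil_line q1 FF' xF.
by right; exists i, j; exact: grid_line_unique.
Qed.
End Pencil.

Section Reindex.
Variables (x : 'I_n) (P : 'I_4 -> 'I_3 -> 'I_n) (s : 'I_4 -> 'I_3 -> 'I_3).
Hypotheses (pencilP : pencil x P) (s_inj : forall g, injective (s g)).

Let Ps g k := P g (s g k).

Lemma pencil_reindex : pencil x Ps.
Proof.
have imE g : [set Ps g k | k : 'I_3] = [set P g k | k : 'I_3].
  have [s' sK Ks] := injF_bij (@s_inj g).
  apply/setP => p; apply/imsetP/imsetP => [[k _ ->]|[k _ ->]]; first by exists (s g k).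
  by exists (s' k) => //; rewrite /Ps Ks.
split=> [g|g k|g k h l].
- by rewrite /pencil_line imE; exact: (pencil_lineF pencilP).
- exact: (pencil_neqx pencilP).
- by move/(pencil_inj pencilP) => [<- /s_inj].
Qed.

Lemma grid_coord_reindex g i j :
  s g (grid_coord Ps g i j) = grid_coord P g (s q0 i) (s q1 j).
Proof.
have [GF a b] := grid_lineP pencil_reindex i j.
have eG := grid_line_unique pencilP GF a b.
by apply/esym/(grid_coord_unique pencilP); rewrite -eG; exact: (grid_coordP pencil_reindex).
Qed.

End Reindex.

Lemma pencil_normalize x P : pencil x P -> exists P', [/\ pencil x P',
  forall j, grid_coord P' q2 t0 j = j, forall j, grid_coord P' q3 t0 j = j &
  forall i, grid_coord P' q2 i t0 = i].
Proof.
move=> pencilP.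
have col_inj := grid_coord_injl pencilP (j := t0) (isT : q2 != q1).
have [h _ hK] := injF_bij col_inj.
pose tau i := h (grid_coord P q2 t0 i).
have tauE i : grid_coord P q2 (tau i) t0 = grid_coord P q2 t0 i by exact: hK.
have tau0 : tau t0 = t0 by apply: col_inj; rewrite /= tauE.
pose s (g : 'I_4) := match val g with
  | 0 => tau | 1 => id | 2 => grid_coord P q2 t0 | _ => grid_coord P q3 t0 end.
have s_inj g : injective (s g).
  case: g => [[|[|[|m]]] lt_m4] //=; rewrite /s /=.
  - move=> i i' e; apply: (grid_coord_injr pencilP (i := t0) (isT : q2 != q0)).
    by rewrite -!tauE e.
  - exact: (grid_coord_injr pencilP).
  - exact: (grid_coord_injr pencilP).
have reindex g i j := grid_coord_reindex pencilP s_inj g i j.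
exists (fun g k => P g (s g k)); split.
- exact: pencil_reindex.
- by move=> j; apply: (s_inj q2); rewrite reindex /s /= tau0.
- by move=> j; apply: (s_inj q3); rewrite reindex /s /= tau0.
- by move=> i; apply: (s_inj q2); rewrite reindex /s /= tauE.
Qed.

Section NormalPencil.
Variables (x : 'I_n) (P : 'I_4 -> 'I_3 -> 'I_n).
Hypothesis pencilP : pencil x P.
Hypotheses (f0j : forall j, grid_coord P q2 t0 j = j) (g0j : forall j, grid_coord P q3 t0 j = j).
Hypothesis fi0 : forall i, grid_coord P q2 i t0 = i.

Lemma grid_coord_values :
  let f := grid_coord P q2 in let g := grid_coord P q3 in
  (f t1 t1 = t2 /\ f t1 t2 = t0 /\ f t2 t1 = t0 /\ f t2 t2 = t1) /\
  (g t1 t0 = t2 /\ g t1 t1 = t0 /\ g t1 t2 = t1 /\ g t2 t0 = t1 /\ g t2 t1 = t2 /\ g t2 t2 = t0).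
Proof.
apply: (normal_orthogonal_latin3 f0j g0j fi0 _ _ _ _ (grid_coord_orthogonal pencilP)).
- by move=> i; apply: (grid_coord_injr pencilP).
- by move=> j; apply: (grid_coord_injl pencilP).
- by move=> i; apply: (grid_coord_injr pencilP).
- by move=> j; apply: (grid_coord_injl pencilP).
Qed.

Definition label (m : nat) : 'I_n := if coord13 m is Some (g, k) then P g k else x.

Lemma label_inj : injective (fun v : 'I_13 => label v).
Proof.
move=> v w; rewrite /label.
case ev: (coord13 v) => [[g k]|]; case ew: (coord13 w) => [[h l]|] e; apply: coord13_inj.
- by rewrite /= ev ew; case/(pencil_inj pencilP): e => -> ->.
- by move: (pencil_neqx pencilP g k); rewrite e eqxx.
- by move: (pencil_neqx pencilP h l); rewrite e eqxx.
- by rewrite ev ew.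
Qed.

Definition line_table (c : nat) : {set 'I_n} :=
  match c with
  | 0 => pencil_line x P q0 | 1 => grid_line P t0 t0 | 2 => grid_line P t1 t1
  | 3 => grid_line P t1 t0 | 4 => pencil_line x P q1 | 5 => grid_line P t0 t1
  | 6 => grid_line P t2 t2 | 7 => grid_line P t1 t2 | 8 => grid_line P t2 t0
  | 9 => grid_line P t2 t1 | 10 => pencil_line x P q2 | 11 => grid_line P t0 t2
  | _ => pencil_line x P q3
  end.

Lemma line_tableF c : line_table c \in FF.
Proof.
by case: c => [|[|[|[|[|[|[|[|[|[|[|[|c]]]]]]]]]]]];
  first [exact: (grid_lineF pencilP) | exact: (pencil_lineF pencilP)].
Qed.

Lemma line_table_surj F : F \in FF -> exists2 c, c < 13 & F = line_table c.
Proof.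
case/(line_cases pencilP) => [[g ->]|[i [j ->]]].
  by case: (ord4P g) => [|[|[|]]] ->; [exists 0 | exists 4 | exists 10 | exists 12].
by case: (ord3P i) => [|[|]] ->; case: (ord3P j) => [|[|]] ->;
  [exists 1 | exists 5 | exists 11 | exists 3 | exists 2 | exists 7 | exists 8 | exists 9
  | exists 6].
Qed.

Lemma label_diff_line c : c < 13 ->
  [set label v | v : 'I_13 in diff_line c] = line_table c.
Proof.
have [[f11 [f12 [f21 f22]]] [g10 [g11 [g12 [g20 [g21 g22]]]]]] := grid_coord_values.
have labelE m : label (z13 m) = label (m %% 13) by rewrite /z13 inordK // ltn_mod.
move=> lt_c13; rewrite /diff_line !imsetU !imset_set1 !labelE.
do 13 (case: c lt_c13 => [|c] lt_c13;
  [rewrite /= ?pencil_lineE ?(grid_lineE pencilP) ?f0j ?g0j ?fi0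
     ?f11 ?f12 ?f21 ?f22 ?g10 ?g11 ?g12 ?g20 ?g21 ?g22 /modn /addn /label /=;
   by apply/setP => z; rewrite !inE;
     repeat match goal with |- context [?y == ?a] => case: (y == a) end |]).
by [].
Qed.

Lemma normal_pencil_iso : fam_iso L3 FF.
Proof.
exists (fun v => label v); split; first exact: label_inj.
apply/setP => F; apply/idP/imsetP => [FF'|[L /imsetP[c _ ->] ->]].
  have [c lt_c13 ->] := line_table_surj FF'.
  by exists (diff_line c); [apply/imsetP; exists (Ordinal lt_c13) | rewrite label_diff_line].
by have := label_diff_line (ltn_ord c); rewrite /diff_line => ->; exact: line_tableF.
Qed.
End NormalPencil.
End LinearSpace.

Unset Implicit Arguments.

Theorem lemma4p7 (n : nat) (FF : {set {set 'I_n}}) :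
  3 <= n ->
  (forall F, F \in FF -> #|F| = 4) ->
  gamma3_ge FF 3 ->
  (forall F F', F \in FF -> F' \in FF -> F != F' -> #|F :&: F'| = 1) ->
  fam_iso L3 FF.
Proof.
move=> le3n card_line gammaFF meet1.
have [x [P pencilP]] := pencil_exists card_line gammaFF meet1 le3n.
have [P' [pencilP' f0j g0j fi0]] := pencil_normalize card_line gammaFF meet1 pencilP.
exact: (normal_pencil_iso card_line gammaFF meet1 pencilP' f0j g0j fi0).
Qed.
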